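(* Let $p\ge 2$, $w\ge 0$, $z\in\mathbb{R}^{p-1}$. For $\lambda>0$ let $(\hat\beta^+(\lambda),\hat\beta^-(\lambda),\hat\theta(\lambda))$ be the unique solution of \[ \min_{\beta^\pm\in\mathbb{R},\,\theta\in\mathbb{R}^{p-1}}\ \frac12\bigl(w-(\beta^+-\beta^-)\bigr)^2+\frac12\|z-\theta\|_2^2+\lambda(\beta^++\beta^-)+\lambda\|\theta\|_1 \quad\text{s.t. } \beta^+\ge0,\ \beta^-\ge0,\ \|\theta\|_1\le\beta^++\beta^-. \] Then for each coordinate $k\in\{1,\dots,p-1\}$, the function $\lambda\mapsto|\hat\theta_k(\lambda)|$ is non-increasing on $(0,\infty)$.
   Context: $\|\cdot\|_1$ and $\|\cdot\|_2$ denote the $\ell_1$ and Euclidean norms. The solution of the displayed problem exists and is unique for every $\lambda>0$. *)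

From HB Require Import structures.
From mathcomp Require Import all_boot all_order all_algebra.
From mathcomp Require Import reals.
Set Implicit Arguments. Unset Strict Implicit. Unset Printing Implicit Defensive.
Import Order.TTheory GRing.Theory Num.Theory.
Local Open Scope ring_scope.

Definition l1norm (R : realType) (n : nat) (v : 'rV[R]_n) : R :=
  \sum_(i < n) `|v 0 i|.

Definition sqnorm2 (R : realType) (n : nat) (v : 'rV[R]_n) : R :=
  \sum_(i < n) (v 0 i) ^+ 2.

Definition obj (R : realType) (n : nat) (w : R) (z : 'rV[R]_n) (lam : R)
    (bp bm : R) (th : 'rV[R]_n) : R :=
  2^-1 * (w - (bp - bm)) ^+ 2 + 2^-1 * sqnorm2 (z - th)
  + lam * (bp + bm) + lam * l1norm th.

Definition feasible (R : realType) (n : nat) (bp bm : R) (th : 'rV[R]_n) : Prop :=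
  0 <= bp /\ 0 <= bm /\ l1norm th <= bp + bm.

Definition is_unique_solution (R : realType) (n : nat) (w : R) (z : 'rV[R]_n)
    (lam : R) (bp bm : R) (th : 'rV[R]_n) : Prop :=
  feasible bp bm th /\
  (forall bp' bm' th', feasible bp' bm' th' ->
      obj w z lam bp bm th <= obj w z lam bp' bm' th') /\
  (forall bp' bm' th', feasible bp' bm' th' ->
      obj w z lam bp' bm' th' <= obj w z lam bp bm th ->
      (bp', bm', th') = (bp, bm, th)).

From HB Require Import structures.
From mathcomp Require Import all_boot all_order all_algebra.
From mathcomp Require Import reals.
From mathcomp Require Import ring lra.

Set Implicit Arguments.
Unset Strict Implicit.
Unset Printing Implicit Defensive.
Import Order.TTheory GRing.Theory Num.Theory.
Local Open Scope ring_scope.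

(* Two comparisons of the solutions a, b at parameters l1 < l2, both by an
   exchange argument on the two optimality conditions.  First, raising the
   penalty cannot raise the budget: trading the theta's (or the whole triples)
   between the two problems shows |b|_1 <= |a|_1.  Second, given that, a
   coordinate with |a_k| < |b_k| is impossible: sort every coordinate pair
   into the smaller-magnitude vector p and the larger one q, and replace
   (a, b) by ((1-t) p + t q, t p + (1-t) q) with t chosen so that the convex
   bound on the l1 norms keeps both replacements feasible at the old budgets.
   The sum a + b is preserved, while the sum of the two squared distances to z
   drops by 2 t (1-t) |q - p|^2 > 0, contradicting optimality. *)

Lemma interpolation_weight (R : realFieldType) (u v x y : R) :
  u < x -> u < y -> u + v = x + y ->
  exists2 t, 0 < t < 1 &
    (1 - t) * u + t * v = x /\ t * u + (1 - t) * v = y.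
Proof.
move=> ux uy uvxy; have vu_gt0 : 0 < v - u by lra.
exists ((x - u) / (v - u)).
  by rewrite divr_gt0 ?ltr_pdivrMr ?mul1r; lra.
have tK : (x - u) / (v - u) * (v - u) = x - u by rewrite divfK ?gt_eqF.
by split; move: tK; lra.
Qed.

Section Norms.
Variables (R : realType) (n : nat).
Implicit Types (u v z : 'rV[R]_n) (t : R).

Lemma l1norm_convex u v t : 0 <= t <= 1 ->
  l1norm ((1 - t) *: u + t *: v) <= (1 - t) * l1norm u + t * l1norm v.
Proof.
case/andP=> t0 t1; rewrite /l1norm !mulr_sumr -big_split /=.
apply: ler_sum => i _; rewrite !mxE.
apply: le_trans (ler_normD _ _) _.
by rewrite !normrM (ger0_norm t0) ger0_norm // subr_ge0.
Qed.

Lemma sqnorm2_convex_pair z u v t :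
  sqnorm2 (z - ((1 - t) *: u + t *: v)) + sqnorm2 (z - (t *: u + (1 - t) *: v))
    + 2 * t * (1 - t) * sqnorm2 (v - u)
  = sqnorm2 (z - u) + sqnorm2 (z - v).
Proof.
rewrite /sqnorm2 mulr_sumr -!big_split; apply: eq_bigr => i _ /=.
by rewrite !mxE; ring.
Qed.

Lemma sqnorm2_gt0 v (k : 'I_n) : v 0 k != 0 -> 0 < sqnorm2 v.
Proof.
move=> vk; rewrite /sqnorm2 (bigD1 k) //= ltr_pwDl ?exprn_even_gt0 ?vk //.
by apply: sumr_ge0 => i _; apply: sqr_ge0.
Qed.

Definition minabs_row u v : 'rV[R]_n :=
  \row_i (if `|u 0 i| <= `|v 0 i| then u 0 i else v 0 i).

Definition maxabs_row u v : 'rV[R]_n :=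
  \row_i (if `|u 0 i| <= `|v 0 i| then v 0 i else u 0 i).

Lemma l1norm_minabs_maxabs u v :
  l1norm (minabs_row u v) + l1norm (maxabs_row u v) = l1norm u + l1norm v.
Proof.
rewrite /l1norm -!big_split; apply: eq_bigr => i _ /=.
by rewrite !mxE; case: ifP => _; rewrite addrC.
Qed.

Lemma sqnorm2_minabs_maxabs z u v :
  sqnorm2 (z - minabs_row u v) + sqnorm2 (z - maxabs_row u v)
  = sqnorm2 (z - u) + sqnorm2 (z - v).
Proof.
rewrite /sqnorm2 -!big_split; apply: eq_bigr => i _ /=.
by rewrite !mxE; case: ifP => _; rewrite addrC.
Qed.

Lemma l1norm_minabs_lt u v (k : 'I_n) :
  `|u 0 k| < `|v 0 k| -> l1norm (minabs_row u v) < l1norm v.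
Proof.
move=> uv; rewrite /l1norm (bigD1 k) //= [X in _ < X](bigD1 k) //= !mxE ltW //.
rewrite ltr_leD // ler_sum // => i _; rewrite mxE.
by case: (leP `|u 0 i| `|v 0 i|) => // /ltW.
Qed.

End Norms.

Section Solutions.
Variables (R : realType) (n : nat) (w : R) (z : 'rV[R]_n).

Definition is_solution (lam bp bm : R) (th : 'rV[R]_n) : Prop :=
  feasible bp bm th /\
  forall bp' bm' th', feasible bp' bm' th' ->
    obj w z lam bp bm th <= obj w z lam bp' bm' th'.

Lemma unique_solution_is_solution lam bp bm th :
  is_unique_solution w z lam bp bm th -> is_solution lam bp bm th.
Proof. by case=> feas [opt _]. Qed.

Variables (l1 l2 Pa Ma Pb Mb : R) (a b : 'rV[R]_n).
Hypotheses (sol_a : is_solution l1 Pa Ma a) (sol_b : is_solution l2 Pb Mb b).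

Lemma solution_pair_le {Pa' Ma' a' Pb' Mb' b'} :
  feasible Pa' Ma' a' -> feasible Pb' Mb' b' ->
  obj w z l1 Pa Ma a + obj w z l2 Pb Mb b
    <= obj w z l1 Pa' Ma' a' + obj w z l2 Pb' Mb' b'.
Proof. by move=> fa fb; apply: lerD; [apply: sol_a.2 | apply: sol_b.2]. Qed.

Lemma l1norm_solution_antimono : l1 < l2 -> l1norm b <= l1norm a.
Proof.
move=> l12; rewrite leNgt; apply/negP => ab.
have [[Pa0 [Ma0 aPM]] _] := sol_a; have [[Pb0 [Mb0 bPM]] _] := sol_b.
have l12_gt0 : 0 < l2 - l1 by rewrite subr_gt0.
case: (leP (l1norm b) (Pa + Ma)) => bPMa.
- have := solution_pair_le (conj Pa0 (conj Ma0 bPMa))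
            (conj Pb0 (conj Mb0 (ltW (lt_le_trans ab bPM)))).
  have : 0 < (l2 - l1) * (l1norm b - l1norm a) by rewrite mulr_gt0 ?subr_gt0.
  rewrite /obj; lra.
- have := solution_pair_le (conj Pb0 (conj Mb0 bPM)) (conj Pa0 (conj Ma0 aPM)).
  have : 0 < (l2 - l1) * (Pb + Mb + l1norm b - (Pa + Ma + l1norm a)).
    by rewrite mulr_gt0 // subr_gt0; lra.
  rewrite /obj; lra.
Qed.

Lemma solution_abs_le_of_l1norm_le : 0 <= l1 -> 0 <= l2 ->
  l1norm b <= l1norm a -> forall k, `|b 0 k| <= `|a 0 k|.
Proof.
move=> l1_ge0 l2_ge0 ba k; rewrite leNgt; apply/negP => ab_k.
have [[Pa0 [Ma0 aPM]] _] := sol_a; have [[Pb0 [Mb0 bPM]] _] := sol_b.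
set p := minabs_row a b; set q := maxabs_row a b.
have p_lt_b : l1norm p < l1norm b by apply: l1norm_minabs_lt ab_k.
have [t /andP[t_gt0 t_lt1] [pq_a pq_b]] :=
  interpolation_weight (lt_le_trans p_lt_b ba) p_lt_b (l1norm_minabs_maxabs a b).
set a' := (1 - t) *: p + t *: q; set b' := t *: p + (1 - t) *: q.
have a'_le : l1norm a' <= l1norm a.
  by rewrite -pq_a l1norm_convex // ?ltW.
have b'_le : l1norm b' <= l1norm b.
  have := l1norm_convex p q (t := 1 - t); rewrite subKr -pq_b; apply.
  by rewrite subr_ge0 gerBl !ltW.
have qp_gt0 : 0 < sqnorm2 (q - p).
  apply: (sqnorm2_gt0 (k := k)); rewrite !mxE (ltW ab_k) subr_eq0.
  by apply: contraTneq ab_k => ->; rewrite ltxx.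
have := sqnorm2_convex_pair z p q t; rewrite sqnorm2_minabs_maxabs -/a' -/b'.
have := solution_pair_le (conj Pa0 (conj Ma0 (le_trans a'_le aPM)))
          (conj Pb0 (conj Mb0 (le_trans b'_le bPM))).
have : 0 < 2 * t * (1 - t) * sqnorm2 (q - p) by rewrite !mulr_gt0 ?subr_gt0.
have : l1 * l1norm a' <= l1 * l1norm a by rewrite ler_wpM2l.
have : l2 * l1norm b' <= l2 * l1norm b by rewrite ler_wpM2l.
rewrite /obj; lra.
Qed.

End Solutions.

Theorem proposition2 (R : realType) (p : nat) (hp : (2 <= p)%N) (w : R)
  (hw : 0 <= w) (z : 'rV[R]_(p.-1))
  (bp bm : R -> R) (th : R -> 'rV[R]_(p.-1))
  (hsol : forall lam : R, 0 < lam ->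
     is_unique_solution w z lam (bp lam) (bm lam) (th lam)) :
  forall k : 'I_(p.-1), forall l1 l2 : R, 0 < l1 -> l1 <= l2 ->
    `|th l2 0 k| <= `|th l1 0 k|.
Proof.
move=> k l1 l2 l1_gt0; rewrite le_eqVlt => /predU1P[<- // | l12].
have l2_gt0 : 0 < l2 := lt_trans l1_gt0 l12.
have sol_1 := unique_solution_is_solution (hsol l1 l1_gt0).
have sol_2 := unique_solution_is_solution (hsol l2 l2_gt0).
apply: (solution_abs_le_of_l1norm_le sol_1 sol_2 (ltW l1_gt0) (ltW l2_gt0)).
exact: l1norm_solution_antimono sol_1 sol_2 l12.
Qed.
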